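(* Let $n\ge 2$, $\theta\in[0,1]$, and $C(\mathbf u)=\theta\prod_{i=1}^n u_i+(1-\theta)\min\{u_1,\dots,u_n\}$ for $\mathbf u\in[0,1]^n$. Then $C$ is $I(\mathbf 1)$ and $I(-\mathbf 1)$, where $\mathbf 1=(1,\dots,1)$.
   Context: For $\alpha\in\{-1,1\}^n$ and a random vector $\mathbf X$, write $\alpha\mathbf X=(\alpha_1X_1,\dots,\alpha_nX_n)$; inequalities between vectors are componentwise. $\mathbf X$ is $I(\alpha)$ if for every $\mathbf x\in\mathbb R^n$, $\mathbb P[\alpha\mathbf X>\mathbf x\mid \alpha\mathbf X>\mathbf x']\le \mathbb P[\alpha\mathbf X>\mathbf x\mid \alpha\mathbf X>\mathbf x'']$ whenever $\mathbf x'\le\mathbf x''$ and $\mathbb P[\alpha\mathbf X>\mathbf x'']>0$. A copula is $I(\alpha)$ if a random vector with that distribution function is. *)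

From HB Require Import structures.
From mathcomp Require Import all_boot all_order all_algebra.
From mathcomp Require Import all_classical all_reals all_analysis.
Set Implicit Arguments. Unset Strict Implicit. Unset Printing Implicit Defensive.
Import Order.TTheory GRing.Theory Num.Theory.
Local Open Scope classical_set_scope.
Local Open Scope ring_scope.

(* The function C(u) = theta * prod_i u_i + (1 - theta) * min_i u_i on [0,1]^n
   (the min over a nonempty index set; the neutral element 1 is harmless on [0,1]). *)
Definition copC {R : realType} (n : nat) (theta : R) (u : 'I_n -> R) : R :=
  theta * \prod_(i < n) u i + (1 - theta) * \big[Num.min/1]_(i < n) u i.

Definition clamp01 {R : realType} (x : R) : R := Num.max 0 (Num.min x 1).

(* The distribution function on R^n of a random vector whose distribution function
   restricted to [0,1]^n is the copula C (uniform margins): H(x) = C(clamp x). *)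
Definition copula_df {R : realType} (n : nat) (C : ('I_n -> R) -> R) (x : 'I_n -> R) : R :=
  C (fun i => clamp01 (x i)).

Definition has_df {d} {T : measurableType d} {R : realType} (P : probability T R)
  (n : nat) (X : 'I_n -> {RV P >-> R}) (H : ('I_n -> R) -> R) : Prop :=
  forall x : 'I_n -> R, P [set t | forall i, X i t <= x i] = (H x)%:E.

Definition gtEv {d} {T : measurableType d} {R : realType} (P : probability T R)
  (n : nat) (alpha : 'I_n -> R) (X : 'I_n -> {RV P >-> R}) (x : 'I_n -> R) : set T :=
  [set t | forall i, x i < alpha i * X i t].

Definition condP {d} {T : measurableType d} {R : realType} (P : probability T R)
  (A B : set T) : R := fine (P (A `&` B)) / fine (P B).

Definition I_alpha {d} {T : measurableType d} {R : realType} (P : probability T R)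
  (n : nat) (alpha : 'I_n -> R) (X : 'I_n -> {RV P >-> R}) : Prop :=
  forall x x' x'' : 'I_n -> R,
    (forall i, x' i <= x'' i) ->
    (0 < P (gtEv alpha X x''))%E ->
    condP P (gtEv alpha X x) (gtEv alpha X x') <=
    condP P (gtEv alpha X x) (gtEv alpha X x'').

(* A copula C (on n coordinates) is I(alpha): a (here: every) random vector with
   distribution function C is I(alpha). *)
Definition copula_I_alpha {R : realType} (n : nat) (C : ('I_n -> R) -> R)
  (alpha : 'I_n -> R) : Prop :=
  forall (d : measure_display) (T : measurableType d) (P : probability T R)
         (X : 'I_n -> {RV P >-> R}),
    has_df X (copula_df C) -> I_alpha alpha X.

From mathcomp Require Import all_boot all_order all_algebra.
From mathcomp Require Import all_classical all_reals all_analysis.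
From mathcomp Require Import ring lra.
Import Order.TTheory GRing.Theory Num.Theory.
Set Implicit Arguments. Unset Strict Implicit. Unset Printing Implicit Defensive.
Local Open Scope ring_scope.

(* For alpha = 1 and alpha = -1 the events {alpha X > x} are closed under
   intersection, {alpha X > x} `&` {alpha X > x'} = {alpha X > max x x'}, and have
   probability C (w x), where w x = 1 - clamp x (C is its own survival copula; the
   survival function is computed by inclusion-exclusion over the coordinates) or
   w x = clamp (-x) (C is continuous).  In both cases w (max x x') = min (w x) (w x'),
   so w is antitone and the I(alpha) inequality reduces to
   C u * C v <= C (min u v) * C c  for u, v <= c <= 1.
   Expanding C = theta * prod + (1 - theta) * min, the prod-prod term follows from
   prod u * prod v = prod (min u v) * prod (max u v), the min-min term is similar,
   and the cross terms follow from the supermodularity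
   prod u + prod v <= prod (min u v) + prod (max u v), applied off the coordinate
   where min u is attained. *)

Section ProductMinMax.
Variable R : realDomainType.

Lemma prod_mul_min_max (I : Type) (r : seq I) (P : pred I) (u v : I -> R) :
  \prod_(i <- r | P i) u i * \prod_(i <- r | P i) v i =
  \prod_(i <- r | P i) Num.min (u i) (v i) * \prod_(i <- r | P i) Num.max (u i) (v i).
Proof.
by rewrite -!big_split; apply: eq_bigr => i _ /=; case: leP => _; rewrite // mulrC.
Qed.

Lemma prodD_le_prod_min_max (I : Type) (r : seq I) (P : pred I) (u v : I -> R) :
  (forall i, 0 <= u i) -> (forall i, 0 <= v i) ->
  \prod_(i <- r | P i) u i + \prod_(i <- r | P i) v i <=
  \prod_(i <- r | P i) Num.min (u i) (v i) + \prod_(i <- r | P i) Num.max (u i) (v i).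
Proof.
move=> u0 v0; elim: r => [|a r IH]; first by rewrite !big_nil.
rewrite !big_cons /=; case: ifP => // _.
have le_minu : \prod_(i <- r | P i) Num.min (u i) (v i) <= \prod_(i <- r | P i) u i.
  by apply: ler_prod => i _; rewrite /= le_min ge_min lexx u0 v0.
have le_minv : \prod_(i <- r | P i) Num.min (u i) (v i) <= \prod_(i <- r | P i) v i.
  by apply: ler_prod => i _; rewrite /= le_min ge_min lexx u0 v0 orbT.
set U := \prod_(i <- r | P i) u i in IH le_minu *.
set V := \prod_(i <- r | P i) v i in IH le_minv *.
set B := \prod_(i <- r | P i) Num.min (u i) (v i) in IH le_minu le_minv *.
set E := \prod_(i <- r | P i) Num.max (u i) (v i) in IH *.
have := u0 a; have := v0 a.
by case: (leP (u a) (v a)) => ab; nra.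
Qed.

End ProductMinMax.

Lemma prod_sub_le (R : realFieldType) (I : Type) (r : seq I) (u w : I -> R) e :
  0 <= e -> (forall i, 0 <= u i <= 1) -> (forall i, 0 <= w i <= 1) ->
  (forall i, u i - e <= w i) ->
  \prod_(i <- r) u i - \prod_(i <- r) w i <= (size r)%:R * e.
Proof.
move=> e0 u01 w01 uw; elim: r => [|a r IH]; first by rewrite !big_nil subrr mul0r.
rewrite !big_cons /= -addn1 natrD mulrDl mul1r.
set U := \prod_(i <- r) u i in IH *; set W := \prod_(i <- r) w i in IH *.
have /andP[U0 U1] : 0 <= U <= 1 by rewrite prodr_ge0 ?prodr_ile1 // => i; case/andP: (u01 i).
have /andP[W0 W1] : 0 <= W <= 1 by rewrite prodr_ge0 ?prodr_ile1 // => i; case/andP: (w01 i).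
have se0 : 0 <= (size r)%:R * e by rewrite mulr_ge0.
have /andP[ua0 ua1] := u01 a; have /andP[wa0 wa1] := w01 a; have uwa := uw a.
have first_factor : u a * (U - W) <= (size r)%:R * e.
  case: (leP U W) => UW; first by rewrite (le_trans _ se0) // mulr_ge0_le0 // subr_le0.
  by rewrite (le_trans _ IH) // ler_piMl // subr_ge0 ltW.
have second_factor : (u a - w a) * W <= e by nra.
nra.
Qed.

Lemma max0_subr (R : realDomainType) (a b : R) :
  Num.max (a - b) 0 = a - Num.min a b.
Proof. by rewrite !maxEle !minEle; repeat case: ifP; move=> *; lra. Qed.

Lemma max0_subr_max (R : realDomainType) (m M a : R) :
  Num.max (m - Num.max M a) 0 = Num.max (m - M) 0 - Num.max (Num.min m a - M) 0.
Proof. by rewrite !maxEle !minEle; repeat case: ifP; move=> *; lra. Qed.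

Lemma ord_ltnS n (i j : 'I_n) : (i < j.+1)%N = (i == j) || (i < j)%N.
Proof. by rewrite ltnS leq_eqVlt. Qed.

Lemma one_sub_bigmax (R : realDomainType) (I : finType) (F : I -> R) :
  1 - \big[Num.max/0]_i F i = \big[Num.min/1]_i (1 - F i).
Proof.
by apply: (big_morph (fun z => 1 - z)) => [a b|]; rewrite ?subr0 // oppr_max addr_minr.
Qed.

Section Clamp.
Variable R : realType.
Implicit Types x y e : R.

Lemma clamp01_itv x : 0 <= clamp01 x <= 1.
Proof. by rewrite /clamp01 !maxEle !minEle; repeat case: ifP; move=> *; lra. Qed.

Lemma le_clamp01 x y : x <= y -> clamp01 x <= clamp01 y.
Proof. by move=> xy; rewrite /clamp01 !maxEle !minEle; repeat case: ifP; move=> *; lra. Qed.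

Lemma clamp01_min x y : clamp01 (Num.min x y) = Num.min (clamp01 x) (clamp01 y).
Proof.
by case: (leP x y) => [/le_clamp01/min_idPl | /ltW/le_clamp01/min_idPr] ->.
Qed.

Lemma clamp01_max x y : clamp01 (Num.max x y) = Num.max (clamp01 x) (clamp01 y).
Proof.
by case: (leP x y) => [/le_clamp01/max_idPr | /ltW/le_clamp01/max_idPl] ->.
Qed.

Lemma clamp01_1 : clamp01 (1 : R) = 1.
Proof. by rewrite /clamp01 (min_idPl (lexx 1)) (max_idPr ler01). Qed.

Lemma clamp01_subr x e : 0 <= e -> clamp01 x - e <= clamp01 (x - e).
Proof. by move=> e0; rewrite /clamp01 !maxEle !minEle; repeat case: ifP; move=> *; lra. Qed.

End Clamp.

Section CopulaAlgebra.
Variables (R : realType) (n : nat) (t : R).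
Hypotheses (t0 : 0 <= t) (t1 : t <= 1).
Local Notation pr u := (\prod_(i < n) u i).
Local Notation mn u := (\big[Num.min/1]_(i < n) u i).

Lemma bigmin_eq_at (u : 'I_n -> R) : (0 < n)%N -> (forall i, u i <= 1) ->
  exists i0, mn u = u i0.
Proof.
by case: n u => // m u _ u1; exists [arg min_(i < ord0) u i]%O; exact: bigmin_eq_arg.
Qed.

Lemma prod_bigmin_cross (u v : 'I_n -> R) : (0 < n)%N ->
  (forall i, 0 <= u i <= 1) -> (forall i, 0 <= v i) -> mn u <= mn v ->
  pr u * mn v + pr v * mn u <=
  pr (fun i => Num.min (u i) (v i)) * mn v + pr (fun i => Num.max (u i) (v i)) * mn u.
Proof.
move=> n0 hu v0 muv.
have u0 i : 0 <= u i by case/andP: (hu i).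
have [i0 mu_i0] := bigmin_eq_at n0 (fun i => proj2 (andP (hu i))).
(* At the coordinate i0 where min u is attained, u i0 <= v i0, which fixes the
   i0-th factors of the min- and max-products. *)
have uv_i0 : u i0 <= v i0 by rewrite -mu_i0 (le_trans muv) ?bigmin_le.
rewrite mu_i0 [pr u](bigD1 i0) // [pr v](bigD1 i0) //.
rewrite [pr (fun i => Num.min _ _)](bigD1 i0) // [pr (fun i => Num.max _ _)](bigD1 i0) //=.
rewrite (min_idPl uv_i0) (max_idPr uv_i0).
set A := \prod_(i < n | i != i0) u i; set V := \prod_(i < n | i != i0) v i.
set B := \prod_(i < n | i != i0) Num.min (u i) (v i).
set E := \prod_(i < n | i != i0) Num.max (u i) (v i).
have ABVE : A + V <= B + E := prodD_le_prod_min_max _ _ u0 v0.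
have BA : B <= A by apply: ler_prod => i _; rewrite le_min ge_min lexx u0 v0.
have mv_le : mn v <= v i0 := bigmin_le 1 i0 v.
have k1 : 0 <= u i0 * ((v i0 - mn v) * (A - B)) by rewrite !mulr_ge0 ?subr_ge0.
have k2 : 0 <= u i0 * (v i0 * (B + E - A - V)) by rewrite !mulr_ge0 //; lra.
nra.
Qed.

Lemma copC_mul_le (u v c : 'I_n -> R) : (0 < n)%N ->
  (forall i, 0 <= u i) -> (forall i, 0 <= v i) ->
  (forall i, u i <= c i) -> (forall i, v i <= c i) -> (forall i, c i <= 1) ->
  copC t u * copC t v <= copC t (fun i => Num.min (u i) (v i)) * copC t c.
Proof.
move=> n0 u0 v0 uc vc c1.
wlog muv : u v u0 v0 uc vc / mn u <= mn v.
  move=> le_uv; case: (leP (mn u) (mn v)) => [|/ltW]; first exact: le_uv.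
  rewrite mulrC (_ : (fun i => _) = fun i => Num.min (v i) (u i)); first exact: le_uv.
  by apply/funext => i; rewrite minC.
have u1 i : 0 <= u i <= 1 by rewrite u0 (le_trans (uc i)).
have mn_le_c w : (forall i, w i <= c i) -> mn w <= mn c.
  move=> wc; apply: le_bigmin => [|i _]; first exact: bigmin_le_id.
  by apply: le_trans (wc i); exact: bigmin_le.
have mn_min : mn (fun i => Num.min (u i) (v i)) = mn u by rewrite bigmin_split (min_idPl muv).
have mu0 : 0 <= mn u by apply: le_bigmin.
have c0 i : 0 <= c i by rewrite (le_trans (u0 i)).
have pmax_c : pr (fun i => Num.max (u i) (v i)) <= pr c.
  by apply: ler_prod => i _; rewrite le_max u0 ge_max uc vc.
have pmin0 : 0 <= pr (fun i => Num.min (u i) (v i)) by apply: prodr_ge0 => i _; rewrite le_min u0 v0.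
have prod_term : pr u * pr v <= pr (fun i => Num.min (u i) (v i)) * pr c.
  by rewrite prod_mul_min_max ler_wpM2l.
have cross_term : pr u * mn v + pr v * mn u <=
    pr (fun i => Num.min (u i) (v i)) * mn c + pr c * mn u.
  apply: le_trans (prod_bigmin_cross n0 u1 v0 muv) _.
  by rewrite lerD // ?ler_wpM2l ?ler_wpM2r ?mn_le_c // prodr_ge0.
have min_term : mn u * mn v <= mn u * mn c by rewrite ler_wpM2l ?mn_le_c.
rewrite /copC mn_min.
have s0 : 0 <= 1 - t by rewrite subr_ge0.
have := ler_wpM2l (mulr_ge0 t0 t0) prod_term.
have := ler_wpM2l (mulr_ge0 t0 s0) cross_term.
have := ler_wpM2l (mulr_ge0 s0 s0) min_term.
lra.
Qed.

Lemma copC_le (u w : 'I_n -> R) :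
  (forall i, 0 <= u i) -> (forall i, u i <= w i) -> copC t u <= copC t w.
Proof.
move=> u0 uw; rewrite /copC lerD // ler_wpM2l ?subr_ge0 //.
  by apply: ler_prod => i _; rewrite u0 uw.
apply: le_bigmin => [|i _]; first exact: bigmin_le_id.
by apply: le_trans (uw i); exact: bigmin_le.
Qed.

Lemma copC1 : copC t (fun _ : 'I_n => 1) = 1.
Proof. by rewrite /copC big1_eq bigmin_eq_id //; ring. Qed.

Lemma copC_sub_le (u w : 'I_n -> R) e : 0 <= e ->
  (forall i, 0 <= u i <= 1) -> (forall i, 0 <= w i <= 1) -> (forall i, u i - e <= w i) ->
  copC t u - copC t w <= n.+1%:R * e.
Proof.
move=> e0 u01 w01 uw.
have size_n : size (index_enum 'I_n) = n.
  by rewrite [index_enum _]unlock -enumT size_enum_ord.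
have := prod_sub_le (index_enum 'I_n) e0 u01 w01 uw; rewrite size_n => prod_le.
have min_le : mn u - e <= mn w.
  apply: le_bigmin => [|i _]; first by rewrite lerBlDr (le_trans (bigmin_le_id _ _ _ _)) // lerDl.
  by rewrite (le_trans _ (uw i)) // lerB // bigmin_le.
have s0 : 0 <= 1 - t by rewrite subr_ge0.
rewrite /copC -addn1 natrD mulrDl mul1r.
have := ler_wpM2l t0 prod_le; have := ler_wpM2l s0 min_le.
have : 0 <= (1 - t) * (n%:R * e) by rewrite !mulr_ge0.
have : 0 <= t * e by rewrite mulr_ge0.
lra.
Qed.

End CopulaAlgebra.

Local Open Scope classical_set_scope.

Lemma measurable_forall d (T : measurableType d) (I : finType) (Q : I -> set T) :
  (forall i, measurable (Q i)) -> measurable [set s | forall i, Q i s].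
Proof.
move=> mQ; rewrite (_ : [set s | _] = \bigcap_(i in [set: I]) Q i).
  by apply: fin_bigcap_measurable => //; exact: finite_finset.
by apply/seteqP; split => s /= Qs i //; apply: Qs.
Qed.

Lemma probability_setI_full d (T : measurableType d) (R : realType) (P : probability T R)
    (A B : set T) :
  measurable A -> measurable B -> P B = 1%E -> P (A `&` B) = P A.
Proof.
move=> mA mB PB1; rewrite [RHS](measureDI P mA mB).
rewrite [X in (X + _)%E](_ : _ = 0%E) ?add0e //.
apply/le_anti; rewrite measure_ge0 andbT.
have PCB : P (~` B) = 0%E by rewrite probability_setC ?PB1 ?subee.
rewrite -PCB; apply: le_measure; rewrite ?inE.
- exact: measurableD.
- exact: measurableC.
- by move=> s [].
Qed.

Section CopulaVector.
Variables (R : realType) (d : measure_display) (T : measurableType d) (P : probability T R).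
Variables (n : nat) (X : 'I_n -> {RV P >-> R}) (t : R).
Hypotheses (t0 : 0 <= t) (t1 : t <= 1).
Hypothesis X_df : has_df X (copula_df (copC t)).

Lemma measurable_X_le i y : measurable [set s | X i s <= y].
Proof.
rewrite (_ : [set s | _] = X i @^-1` `]-oo, y]); first exact: measurable_funPTI.
by apply/seteqP; split => s /=; rewrite in_itv.
Qed.

Lemma measurable_X_lt i y : measurable [set s | X i s < y].
Proof.
rewrite (_ : [set s | _] = X i @^-1` `]-oo, y[); first exact: measurable_funPTI.
by apply/seteqP; split => s /=; rewrite in_itv.
Qed.

Lemma measurable_X_gt i y : measurable [set s | y < X i s].
Proof.
rewrite (_ : [set s | _] = X i @^-1` `]y, +oo[); first exact: measurable_funPTI.
by apply/seteqP; split => s /=; rewrite in_itv /= andbT.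
Qed.

Section Survival.
Variable x : 'I_n -> R.

Definition box k (y : 'I_n -> R) :=
  [set s | forall i : 'I_n, X i s <= y i /\ ((i < k)%N -> x i < X i s)].

Definition cap_at (j : 'I_n) (y : 'I_n -> R) i :=
  if i == j then Num.min (y i) (x i) else y i.

Definition box_factor k (y : 'I_n -> R) (i : 'I_n) :=
  if (i < k)%N then Num.max (clamp01 (y i) - clamp01 (x i)) 0 else clamp01 (y i).

(* The C-volume of the box (x_i, y_i] (i < k) times (-oo, y_i] (i >= k). *)
Definition box_vol k (y : 'I_n -> R) :=
  t * \prod_(i < n) box_factor k y i
  + (1 - t) * Num.max (\big[Num.min/1]_(i < n) clamp01 (y i)
                       - \big[Num.max/0]_(i < n | (i < k)%N) clamp01 (x i)) 0.

Lemma measurable_box k y : measurable (box k y).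
Proof.
apply: measurable_forall => i; case: (i < k)%N.
  rewrite (_ : (fun s => _) = [set s | X i s <= y i] `&` [set s | x i < X i s]).
    exact: measurableI (measurable_X_le _ _) (measurable_X_gt _ _).
  by apply/seteqP; split => s /= [? xX]; split => //; exact: xX.
rewrite (_ : (fun s => _) = [set s | X i s <= y i]); first exact: measurable_X_le.
by apply/seteqP; split => s /=; [case | split].
Qed.

Lemma box_succ (j : 'I_n) y : box j.+1 y = box j y `\` box j (cap_at j y).
Proof.
apply/seteqP; split => s /=.
  move=> box1; split=> [i|box_cap].
    by have [Xy xX] := box1 i; split=> // ij; apply: xX; rewrite ltnW.
  have [Xcap _] := box_cap j; have [_ /(_ (ltnSn j)) xX] := box1 j.
  by move: Xcap; rewrite /cap_at eqxx le_min (leNgt _ (x j)) xX andbF.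
move=> [box0 Nbox_cap] i; have [Xy xX] := box0 i.
split=> // /[!ord_ltnS] /orP[/eqP->|]; last exact: xX.
rewrite ltNge; apply: contra_notN Nbox_cap => Xx i'.
have [Xy' xX'] := box0 i'; split=> //.
by rewrite /cap_at; case: eqP => // ->; rewrite le_min Xx (box0 j).1.
Qed.

Lemma prob_box_succ (j : 'I_n) y :
  P (box j.+1 y) = (P (box j y) - P (box j (cap_at j y)))%E.
Proof.
have sub_cap : box j (cap_at j y) `<=` box j y.
  move=> s /= box_cap i; have [Xcap xX] := box_cap i; split=> //.
  by move: Xcap; rewrite /cap_at; case: eqP => // _ /le_trans; apply; rewrite ge_min lexx.
rewrite box_succ measureD ?(setIidr sub_cap) //; try exact: measurable_box.
by rewrite ltey_eq fin_num_measure //; exact: measurable_box.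
Qed.

Lemma box_vol0 y : box_vol 0 y = copula_df (copC t) y.
Proof.
rewrite /box_vol /box_factor /copula_df /copC.
rewrite [\big[Num.max/0]_(i < n | _) _]big_pred0 // subr0 (max_idPl _) //.
by apply: le_bigmin => // i _; case/andP: (clamp01_itv (y i)).
Qed.

Lemma box_vol_succ (j : 'I_n) y :
  box_vol j.+1 y = box_vol j y - box_vol j (cap_at j y).
Proof.
have cap_neq i : i != j -> cap_at j y i = y i by rewrite /cap_at => /negbTE ->.
have clamp_cap_j : clamp01 (cap_at j y j) = Num.min (clamp01 (y j)) (clamp01 (x j)).
  by rewrite /cap_at eqxx clamp01_min.
have max_succ : \big[Num.max/0]_(i < n | (i < j.+1)%N) clamp01 (x i) =
    Num.max (clamp01 (x j)) (\big[Num.max/0]_(i < n | (i < j)%N) clamp01 (x i)).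
  rewrite (bigmaxD1 j) ?ltnSn //; congr Num.max; apply: eq_bigl => i.
  by rewrite ord_ltnS; case: eqVneq => [->|]; rewrite ?ltnn ?andbT.
have min_cap : \big[Num.min/1]_(i < n) clamp01 (cap_at j y i) =
    Num.min (\big[Num.min/1]_(i < n) clamp01 (y i)) (clamp01 (x j)).
  rewrite (bigminD1 j) // [in RHS](bigminD1 j) // clamp_cap_j minAC.
  congr (Num.min (Num.min _ _) _).
  by apply: eq_bigr => i /= ij; rewrite cap_neq.
have factor_neq i : i != j ->
    box_factor j.+1 y i = box_factor j y i /\ box_factor j (cap_at j y) i = box_factor j y i.
  by move=> ij; rewrite /box_factor ord_ltnS (negbTE ij) cap_neq.
rewrite /box_vol max_succ min_cap (maxC (clamp01 (x j))) max0_subr_max.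
rewrite [\prod_(i < n) box_factor j.+1 y i](bigD1 j) //.
rewrite [\prod_(i < n) box_factor j y i](bigD1 j) //.
rewrite [\prod_(i < n) box_factor j (cap_at j y) i](bigD1 j) //=.
rewrite [\prod_(i < n | _) box_factor j.+1 y i](eq_bigr (box_factor j y)); last first.
  by move=> i /factor_neq [].
rewrite [\prod_(i < n | _) box_factor j (cap_at j y) i](eq_bigr (box_factor j y)); last first.
  by move=> i /factor_neq [].
rewrite /box_factor ltnSn ltnn clamp_cap_j (max0_subr (clamp01 (y j))).
ring.
Qed.

Lemma prob_box k y : (k <= n)%N -> P (box k y) = (box_vol k y)%:E.
Proof.
elim: k y => [|k IH] y kn.
  rewrite box_vol0 -X_df; congr (P _).
  by apply/seteqP; split=> s /= Xy i; [case: (Xy i) | split].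
by rewrite (prob_box_succ (Ordinal kn)) !IH 1?ltnW // (box_vol_succ (Ordinal kn)) EFinB.
Qed.

End Survival.

Lemma prob_gtEv1 x :
  P (gtEv (fun _ => 1) X x) = (copC t (fun i => 1 - clamp01 (x i)))%:E.
Proof.
have gtE : gtEv (fun _ => 1) X x = [set s | forall i, x i < X i s].
  by apply/seteqP; split=> s /= xX i; move: (xX i); rewrite mul1r.
have boxE : box x n (fun _ => 1) =
    [set s | forall i, x i < X i s] `&` [set s | forall i, X i s <= 1].
  apply/seteqP; split=> s /=; last by move=> [xX X1] i; split.
  by move=> b; split=> i; have [X1 xX] := b i; [exact: xX | exact: X1].
have PX1 : P [set s | forall i, X i s <= 1] = 1%E.
  rewrite X_df /copula_df (_ : (fun i => clamp01 1) = fun _ => 1) ?copC1 //.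
  by apply/funext => i; rewrite clamp01_1.
rewrite gtE -(probability_setI_full _ _ PX1); last 2 first.
- by apply: measurable_forall => i; exact: measurable_X_gt.
- by apply: measurable_forall => i; exact: measurable_X_le.
rewrite -boxE prob_box // /box_vol /box_factor /copC clamp01_1.
have cx1 i : clamp01 (x i) <= 1 by case/andP: (clamp01_itv (x i)).
congr (_ * _ + _ * _)%:E.
  by apply: eq_bigr => i _; rewrite ltn_ord (max_idPl _) // subr_ge0.
rewrite bigmin_eq_id // (eq_bigl xpredT) => [|i]; last exact: ltn_ord.
rewrite one_sub_bigmax (max_idPl _) //.
by apply: le_bigmin => // i _; rewrite subr_ge0.
Qed.

Lemma prob_gtEvN1 x :
  P (gtEv (fun _ => -1) X x) = (copC t (fun i => clamp01 (- x i)))%:E.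
Proof.
have gtE : gtEv (fun _ => -1) X x = [set s | forall i, X i s < - x i].
  by apply/seteqP; split=> s /= xX i; move: (xX i); rewrite mulN1r ltrNr.
have mE : measurable [set s | forall i, X i s < - x i].
  by apply: measurable_forall => i; exact: measurable_X_lt.
have mle y : measurable [set s | forall i, X i s <= y i].
  by apply: measurable_forall => i; exact: measurable_X_le.
rewrite gtE -[LHS]fineK ?fin_num_measure //; congr _%:E.
set E := [set s | _] in mE *.
have le_PE y : (forall i, y i < - x i) ->
    copC t (fun i => clamp01 (y i)) <= fine (P E).
  move=> y_lt; rewrite -lee_fin fineK ?fin_num_measure // -[X in (X <= _)%E]X_df.
  by apply: le_measure; rewrite ?inE // => s /= Xy i; exact: le_lt_trans (Xy i) (y_lt i).
apply/le_anti/andP; split.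
  rewrite -lee_fin fineK ?fin_num_measure // -[X in (_ <= X)%E]X_df.
  by apply: le_measure; rewrite ?inE // => s /= Xx i; exact: ltW.
apply/ler_addgt0Pr => e e0.
have n1_gt0 : 0 < n.+1%:R :> R by rewrite ltr0n.
pose e' := e / n.+1%:R.
have e'0 : 0 < e' by rewrite divr_gt0.
have y_lt i : - x i - e' < - x i by rewrite ltrBlDr ltrDl.
have := le_PE _ y_lt.
have := copC_sub_le t0 t1 (ltW e'0) (fun i => clamp01_itv (- x i))
  (fun i => clamp01_itv (- x i - e')) (fun i => clamp01_subr (- x i) (ltW e'0)).
rewrite /e' mulrCA divff ?mulr1 ?gt_eqF //.
lra.
Qed.

End CopulaVector.

Section ConditionalIncrease.
Variables (R : realType) (d : measure_display) (T : measurableType d) (P : probability T R).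
Variables (n : nat) (X : 'I_n -> {RV P >-> R}) (alpha : 'I_n -> R).

Lemma gtEvI x x' :
  gtEv alpha X x `&` gtEv alpha X x' = gtEv alpha X (fun i => Num.max (x i) (x' i)).
Proof.
apply/seteqP; split=> s /=; first by move=> [xX x'X] i; rewrite gt_max xX x'X.
by move=> xX; split=> i; have := xX i; rewrite gt_max => /andP[].
Qed.

Lemma I_alpha_copC (t : R) (W : ('I_n -> R) -> 'I_n -> R) :
  (0 < n)%N -> 0 <= t -> t <= 1 ->
  (forall x, P (gtEv alpha X x) = (copC t (W x))%:E) ->
  (forall x i, 0 <= W x i <= 1) ->
  (forall x x', W (fun i => Num.max (x i) (x' i)) = fun i => Num.min (W x i) (W x' i)) ->
  I_alpha alpha X.
Proof.
move=> n0 t0 t1 PW W01 W_max x x' x'' x'_le pos.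
have max_x'' : (fun i => Num.max (x' i) (x'' i)) = x'' by apply/funext => i; exact/max_idPr.
have W_anti i : W x'' i <= W x' i by rewrite -{1}max_x'' W_max /= ge_min lexx.
have W_min : (fun i => Num.min (Num.min (W x i) (W x' i)) (W x'' i)) =
    fun i => Num.min (W x i) (W x'' i).
  by apply/funext => i; rewrite -minA (min_idPr (W_anti i)).
have W0 z i : 0 <= W z i by case/andP: (W01 z i).
have C_gt0 : 0 < copC t (W x'') by move: pos; rewrite PW lte_fin.
have C_le : copC t (W x'') <= copC t (W x') by apply: copC_le.
have C'_gt0 : 0 < copC t (W x') := lt_le_trans C_gt0 C_le.
rewrite /condP !gtEvI !PW /= !W_max ler_pdivrMr // mulrAC ler_pdivlMr //.
have := copC_mul_le t0 t1 (u := fun i => Num.min (W x i) (W x' i)) (v := W x'') (c := W x') n0.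
rewrite W_min; apply=> i.
- by rewrite le_min !W0.
- exact: W0.
- by rewrite ge_min lexx orbT.
- exact: W_anti.
- by case/andP: (W01 x' i).
Qed.

End ConditionalIncrease.

Theorem mainTheorem9 (R : realType) (n : nat) (theta : R) :
  (2 <= n)%N -> 0 <= theta -> theta <= 1 ->
  @copula_I_alpha R n (copC theta) (fun _ => 1) /\
  @copula_I_alpha R n (copC theta) (fun _ => -1).
Proof.
move=> n2 t0 t1; have n0 : (0 < n)%N by apply: leq_trans n2.
split=> d T P X X_df.
- apply: (I_alpha_copC (W := fun x i => 1 - clamp01 (x i)) n0 t0 t1) => [x|x i|x x'].
  + exact: prob_gtEv1.
  + by have := clamp01_itv (x i); lra.
  + by apply/funext => i; rewrite clamp01_max oppr_max addr_minr.
- apply: (I_alpha_copC (W := fun x i => clamp01 (- x i)) n0 t0 t1) => [x|x i|x x'].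
  + exact: prob_gtEvN1.
  + exact: clamp01_itv.
  + by apply/funext => i; rewrite oppr_max clamp01_min.
Qed.
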